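(* Let $\Lambda\Subset\mathbb X$ and $x\in\mathbb X$. Then \[ \sum_{N\subset\Lambda}|\gamma(x,N)|\,\alpha^N=(1+\alpha(x)\mathbf 1_\Lambda(x))\sum_{N\subset\Lambda\setminus\{x\}}|\gamma(x,N)|\,\alpha^N, \] and \[ \sum_{N\subset\Lambda\setminus\{x\}}|\gamma(x,N)|\,\alpha^N\le\prod_{\substack{X\in\mathbf F(x):\\ X\setminus\{x\}\subset\Lambda}}\max\Big\{|W(X)|,\ 1+|W(X)-1|\alpha^S\ \Big|\ \varnothing\neq S\subset X\setminus\{x\}\Big\}. \]
   Context: $\mathbb X$ is a finite or countably infinite set, $X\Subset\mathbb X$ means finite subset, $\mathbf F$ is the set of finite subsets, $\mathbf F(x)=\{X\Subset\mathbb X\mid x\in X\}$. Fix $W:\mathbf F\to\mathbb C$, $r:\mathbb X\to[0,1)$, $\alpha=\frac r{1-r}$, $\alpha^S=\prod_{s\in S}\alpha(s)$. Conditional interaction: $W(X\mid B)=\prod_{C\subset B}W(X\cup C)$ if $X\cap B=\varnothing$, $0$ if $X=\{y\}$ with $y\in B$, $1$ otherwise; $\kappa(X\mid B)=\prod_{\varnothing\neq S\subset X}W(S\mid B)$ and $\kappa(x\mid B)=\kappa(\{x\}\mid B)$. Kernel: $\gamma(x,N)=\gamma(x,N\mid\varnothing)$ where $\gamma(x,N\mid B)=\sum_{M\subset N}(-1)^{|N\setminus M|}\kappa(x\mid B\cup M)$. A maximum $\max\{a,\ b_S\mid S\in\mathcal S\}$ denotes the maximum of $a$ and all $b_S$ (equal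 to $a$ if $\mathcal S=\varnothing$). *)

From HB Require Import structures.
From mathcomp Require Import all_boot all_order all_algebra.
From mathcomp Require Import finmap.
From mathcomp Require Import complex.
From mathcomp Require Import reals.
Set Implicit Arguments. Unset Strict Implicit. Unset Printing Implicit Defensive.
Import Order.TTheory GRing.Theory Num.Theory.
Local Open Scope ring_scope.
Local Open Scope fset_scope.

Definition cmod (R : rcfType) (z : R[i]) : R := ComplexField.Normc.normc z.

Definition alpha (R : realType) (T : countType) (r : T -> R) (s : T) : R :=
  r s / (1 - r s).

Definition alphaS (R : realType) (T : countType) (r : T -> R) (S : {fset T}) : R :=
  \prod_(s <- S) alpha r s.

Definition condW (R : realType) (T : countType) (W : {fset T} -> R[i])
    (X B : {fset T}) : R[i] :=
  if X `&` B == fset0 then \prod_(C <- fpowerset B) W (X `|` C)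
  else if has (fun y => X == [fset y]) B then 0 else 1.

Definition kappa (R : realType) (T : countType) (W : {fset T} -> R[i])
    (X B : {fset T}) : R[i] :=
  \prod_(S <- fpowerset X | S != fset0) condW W S B.

Definition gammaB (R : realType) (T : countType) (W : {fset T} -> R[i])
    (x : T) (N B : {fset T}) : R[i] :=
  \sum_(M <- fpowerset N) (-1) ^+ #|` N `\` M| * kappa W [fset x] (B `|` M).

Definition gamma (R : realType) (T : countType) (W : {fset T} -> R[i])
    (x : T) (N : {fset T}) : R[i] := gammaB W x N fset0.

From HB Require Import structures.
From mathcomp Require Import all_boot all_order all_algebra.
From mathcomp Require Import finmap.
From mathcomp Require Import complex.
From mathcomp Require Import reals.
From mathcomp Require Import lra.
Import Order.TTheory GRing.Theory Num.Theory.
Set Implicit Arguments. Unset Strict Implicit. Unset Printing Implicit Defensive.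
Local Open Scope fset_scope.
Local Open Scope ring_scope.

(* With [f C := W (x |` C)], [gamma W x] is the Möbius transform of
   [M |-> \prod_(C <= M) f C], and the inequality holds for any [f] and any
   nonnegative weights.  If [f] is 1 on all nonempty sets, the transform is
   [f fset0] at [fset0] and 0 elsewhere.  Otherwise resetting some [f D],
   [D != fset0], to 1 changes the transform by [(f D - 1)] times a transform over
   the supersets of [D], which is the transform of the conditional interaction
   [f (. | D)] on [L `\ D].  Induction on [#|L|] and on the number of sets where
   [f] differs from 1 bounds both pieces; the bound for [f (. | D)] is controlled
   by that for [f] because the pair of inequalities [|z| <= b] and
   [1 + |z - 1| beta <= b] is stable under products.
   The identity holds because [kappa (x | B) = 0] when [x \in B], so that
   [gamma (x, x |` N) = - gamma (x, N)]. *)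

Section FsetLemmas.
Variable K : choiceType.
Implicit Types (a : K) (A B X Y : {fset K}).

Lemma fsetIU_disjoint A B X Y : [disjoint A & B] -> X `<=` A -> Y `<=` B ->
  (X `|` Y) `&` A = X.
Proof.
move=> dAB XA YB; rewrite fsetIUl (fsetIidPl XA).
rewrite disjoint_fsetI0 ?fsetU0 //; apply: fdisjointWl YB _; by rewrite fdisjoint_sym.
Qed.

Lemma fset1_neq0 a : [fset a] != fset0.
Proof. by apply/fset0Pn; exists a; rewrite inE. Qed.

Lemma fsetDUK A B : B `<=` A -> (A `\` B) `|` B = A.
Proof.
move=> BA; apply/fsetP => z; rewrite !inE.
by case: (boolP (z \in B)) => zB /=; rewrite ?orbF // (fsubsetP BA).
Qed.

Lemma fdisjointDl A B : [disjoint A `\` B & B].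
Proof. by apply/fdisjointP => z; rewrite inE => /andP[]. Qed.

Lemma fsetUDK_disjoint A B : [disjoint A & B] -> (A `|` B) `\` B = A.
Proof. by move=> dAB; rewrite fsetDUl fsetDv fsetU0; apply/fsetDidPl. Qed.

Lemma fsetU1D a A B : a \notin B -> (a |` A) `\` B = a |` (A `\` B).
Proof.
move=> aB; apply/fsetP => z; rewrite !inE.
by case: (eqVneq z a) => [->|_] /=; rewrite ?aB ?andbT.
Qed.

Lemma fsetU1DU1 a A B : a \notin A -> (a |` A) `\` (a |` B) = A `\` B.
Proof.
move=> aA; apply/fsetP => z; rewrite !inE.
by case: (eqVneq z a) => [->|_] /=; rewrite ?(negbTE aA) ?andbF.
Qed.

Lemma card_fsetU1D a A B : a \notin A -> B `<=` A ->
  #|` (a |` A) `\` B| = (#|` A `\` B|).+1.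
Proof.
move=> aA BA; rewrite fsetU1D ?cardfsU1; last exact: contra (fsubsetP BA a) aA.
by rewrite inE negb_and aA orbT.
Qed.

End FsetLemmas.

Section BigFpowerset.
Variables (K : choiceType) (V : Type) (idx : V) (op : Monoid.com_law idx).
Implicit Types (a : K) (A B : {fset K}) (F : {fset K} -> V).

Lemma big_fpowersetU A B F : [disjoint A & B] ->
  \big[op/idx]_(Z <- fpowerset (A `|` B)) F Z =
  \big[op/idx]_(X <- fpowerset A) \big[op/idx]_(Y <- fpowerset B) F (X `|` Y).
Proof.
move=> dAB; rewrite pair_big_dep_cond /=.
set P := [fset _ | _ in _, _ in _].
have inP X Y : ((X, Y) \in P) = (X `<=` A) && (Y `<=` B).
  apply/imfset2P/andP => /= [[X' + [Y' + [-> ->]]]|[XA YB]].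
    by rewrite !inE /= !fpowersetE !andbT => -> ->.
  by exists X; rewrite ?inE /= ?fpowersetE ?andbT //;
    exists Y; rewrite ?inE /= ?fpowersetE ?andbT.
have dBA : [disjoint B & A] by rewrite fdisjoint_sym.
have -> : fpowerset (A `|` B) = [fset p.1 `|` p.2 | p in P].
  apply/fsetP => Z; rewrite fpowersetE; apply/idP/imfsetP => /= [ZAB|[[X Y]]].
    exists (Z `&` A, Z `&` B); first by rewrite inP !fsubsetIr.
    by rewrite /= -fsetIUr; apply/esym/fsetIidPl.
  by rewrite inP => /andP[XA YB] ->; apply: fsetUSS.
rewrite big_imfset //= => -[X Y] [X' Y']; rewrite !inP /=.
move=> /andP[XA YB] /andP[X'A Y'B] E; congr pair.
  by rewrite -(fsetIU_disjoint dAB XA YB) E (fsetIU_disjoint dAB X'A Y'B).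
rewrite -(fsetIU_disjoint dBA YB XA) fsetUC E fsetUC.
exact: fsetIU_disjoint dBA Y'B X'A.
Qed.

Lemma big_fpowersetU1 a A F : a \notin A ->
  \big[op/idx]_(Z <- fpowerset (a |` A)) F Z =
  \big[op/idx]_(X <- fpowerset A) op (F X) (F (a |` X)).
Proof.
move=> aA; rewrite fsetUC big_fpowersetU ?fdisjointX1 //.
apply: eq_fbigr => X _ _; rewrite fpowerset1 big_fsetU1 ?big_seq_fset1.
  by rewrite fsetU0 fsetUC.
by rewrite inE eq_sym fset1_neq0.
Qed.

Lemma big_fpowersetU1_mem a A F : a \notin A ->
  \big[op/idx]_(Z <- fpowerset (a |` A) | a \in Z) F Z =
  \big[op/idx]_(X <- fpowerset A) F (a |` X).
Proof.
move=> aA; rewrite big_mkcond big_fpowersetU1 //=.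
apply: eq_fbigr => X; rewrite fpowersetE => XA _.
by rewrite fset1U1 (negbTE (contra (fsubsetP XA a) aA)) Monoid.mul1m.
Qed.

Lemma big_fpowerset_supset A B F : B `<=` A ->
  \big[op/idx]_(Z <- fpowerset A | B `<=` Z) F Z =
  \big[op/idx]_(X <- fpowerset (A `\` B)) F (X `|` B).
Proof.
move=> BA; rewrite big_mkcond -[in LHS](fsetDUK BA) big_fpowersetU ?fdisjointDl //.
apply: eq_fbigr => X; rewrite fpowersetE fsubsetD => /andP[_ dXB] _.
rewrite (big_fsetD1 B) ?fpowersetE //= fsubsetUr big1_fset ?Monoid.mulm1 // => Y.
rewrite !inE fpowersetE => /andP[YB' YB] _; rewrite ifN //.
apply: contra YB' => BXY; rewrite eqEfsubset YB; apply/fsubsetP => z zB.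
move: (fsubsetP BXY z zB); rewrite inE => /orP[zX|//].
by move/fdisjointP: dXB => /(_ z zX); rewrite zB.
Qed.

End BigFpowerset.

Lemma sum_fpowerset_sign (K : choiceType) (V : ringType) (A : {fset K}) :
  \sum_(B <- fpowerset A) (-1) ^+ #|` A `\` B| = (A == fset0)%:R :> V.
Proof.
have [->|/fset0Pn[a aA]] := eqVneq A fset0.
  by rewrite fpowerset0 big_seq_fset1 fsetD0 cardfs0 expr0.
rewrite -(fsetD1K aA) big_fpowersetU1 ?fsetD11 // big1_fset // => B.
rewrite fpowersetE => BA _; rewrite card_fsetU1D ?fsetD11 // fsetU1DU1 ?fsetD11 //.
by rewrite /= exprS mulN1r addNr.
Qed.

Section Cmod.
Variable R : rcfType.
Implicit Types z w : R[i].

Lemma cmod0 : cmod (0 : R[i]) = 0. Proof. exact: ComplexField.Normc.normc0. Qed.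
Lemma cmod1 : cmod (1 : R[i]) = 1. Proof. exact: ComplexField.Normc.normc1. Qed.
Lemma cmodM z w : cmod (z * w) = cmod z * cmod w.
Proof. exact: ComplexField.Normc.normcM. Qed.
Lemma cmodN z : cmod (- z) = cmod z. Proof. exact: normcN. Qed.
Lemma ler_cmodD z w : cmod (z + w) <= cmod z + cmod w. Proof. exact: le_normcD. Qed.
Lemma cmod_ge0 z : 0 <= cmod z. Proof. by case: z => u v; apply: sqrtr_ge0. Qed.

Lemma cmod_prod (I : Type) (s : seq I) (F : I -> R[i]) :
  cmod (\prod_(i <- s) F i) = \prod_(i <- s) cmod (F i).
Proof. exact: (big_morph _ cmodM cmod1). Qed.

Definition dominated (be : R) z (b : R) := cmod z <= b /\ 1 + cmod (z - 1) * be <= b.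

Lemma dominated1 be : dominated be 1 1.
Proof. by rewrite /dominated subrr cmod0 cmod1 mul0r addr0. Qed.

Lemma dominatedM be z w b c : 0 <= be ->
  dominated be z b -> dominated be w c -> dominated be (z * w) (b * c).
Proof.
move=> be0 [zb zb'] [wc wc']; have c0 : 0 <= c := le_trans (cmod_ge0 w) wc.
split; first by rewrite cmodM ler_pM ?cmod_ge0.
have zw1 : cmod (z * w - 1) <= cmod (z - 1) * cmod w + cmod (w - 1).
  rewrite -cmodM (_ : z * w - 1 = (z - 1) * w + (w - 1)) ?ler_cmodD //.
  by rewrite mulrBl mul1r addrA subrK.
(* 1 + |zw - 1| be <= (1 + |w - 1| be) + |z - 1| be |w| <= c + |z - 1| be c <= b c *)
have := ler_wpM2r be0 zw1; have := ler_wpM2l (mulr_ge0 (cmod_ge0 (z - 1)) be0) wc.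
have := ler_wpM2r c0 zb'; nra.
Qed.

Lemma dominated_prod (I : Type) (s : seq I) be (F : I -> R[i]) (B : I -> R) :
  0 <= be -> (forall i, dominated be (F i) (B i)) ->
  dominated be (\prod_(i <- s) F i) (\prod_(i <- s) B i).
Proof.
move=> be0 FB; elim/big_rec2: _ => [|i z b _]; first exact: dominated1.
exact: dominatedM.
Qed.

End Cmod.

Section MobiusBound.
Variables (R : rcfType) (T : choiceType) (a : T -> R).
Hypothesis a_ge0 : forall t, 0 <= a t.
Implicit Types (f : {fset T} -> R[i]) (C D L M N S : {fset T}).

Definition weight S : R := \prod_(s <- S) a s.

Definition subprod f M : R[i] := \prod_(C <- fpowerset M) f C.

Definition mobius f N : R[i] :=
  \sum_(M <- fpowerset N) (-1) ^+ #|` N `\` M| * subprod f M.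

Definition mobius_sup f D N : R[i] :=
  \sum_(M <- fpowerset N | D `<=` M) (-1) ^+ #|` N `\` M| * subprod f M.

Definition mobius_sum f L : R :=
  \sum_(N <- fpowerset L) cmod (mobius f N) * weight N.

Definition bound f C : R :=
  \big[Num.max/cmod (f C)]_(S <- fpowerset C | S != fset0)
     (1 + cmod (f C - 1) * weight S).

Definition bound_prod f L : R := \prod_(C <- fpowerset L) bound f C.

Definition reset f D C : R[i] := if C == D then 1 else f C.

Definition condf f D C : R[i] := \prod_(E <- fpowerset D) f (C `|` E).

Lemma weight_ge0 S : 0 <= weight S.
Proof. by apply: prodr_ge0 => t _; apply: a_ge0. Qed.

Lemma weight0 : weight fset0 = 1.
Proof. exact: big_seq_fset0. Qed.

Lemma weightU S S' : [disjoint S & S'] -> weight (S `|` S') = weight S * weight S'.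
Proof.
move=> dSS'; rewrite /weight (big_fsetID _ (mem S)) /=.
congr (_ * _); apply: eq_fbigl => t; rewrite !inE /=.
  by case: (t \in S); rewrite ?andbT ?andbF.
case tS: (t \in S) => /=; last by rewrite andbT.
by rewrite (negbTE (fdisjointP dSS' t tS)).
Qed.

Lemma cmod_le_bound f C : cmod (f C) <= bound f C.
Proof. exact: bigmax_ge_id. Qed.

Lemma bound_ge0 f C : 0 <= bound f C.
Proof. exact: le_trans (cmod_ge0 _) (cmod_le_bound f C). Qed.

Lemma bound_prod_ge0 f L : 0 <= bound_prod f L.
Proof. by apply: prodr_ge0 => C _; apply: bound_ge0. Qed.

Lemma dominated_bound f C S : S `<=` C -> S != fset0 ->
  dominated (weight S) (f C) (bound f C).
Proof.
move=> SC S0; split; first exact: cmod_le_bound.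
have := @le_bigmax_seq _ _ _ (fpowerset C) (cmod (f C)) S
  (fun S => S != fset0) (fun S => 1 + cmod (f C - 1) * weight S).
by rewrite fpowersetE; apply.
Qed.

Lemma bound_le f C (B : R) : cmod (f C) <= B ->
  (forall S, S `<=` C -> S != fset0 -> 1 + cmod (f C - 1) * weight S <= B) ->
  bound f C <= B.
Proof.
move=> fB SB; rewrite /bound big_seq_cond; apply: bigmax_le => // S.
by rewrite fpowersetE => /andP[]; apply: SB.
Qed.

Lemma bound1 f C : f C = 1 -> bound f C = 1.
Proof.
move=> fC1; rewrite /bound fC1 cmod1; apply: bigmax_eq_id => S _.
by rewrite subrr cmod0 mul0r addr0.
Qed.

Lemma cmod_subprod_le f L : cmod (subprod f L) <= bound_prod f L.
Proof.
by rewrite cmod_prod; apply: ler_prod => C _; rewrite cmod_ge0 cmod_le_bound.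
Qed.

Section Trivial.
Variables (f : {fset T} -> R[i]) (L : {fset T}).
Hypothesis f1 : forall C, C `<=` L -> C != fset0 -> f C = 1.

Lemma subprod_trivial M : M `<=` L -> subprod f M = f fset0.
Proof.
move=> ML; rewrite /subprod (big_fsetD1 fset0) ?fpowersetE ?fsub0set //=.
rewrite big1_fset ?mulr1 // => C; rewrite !inE fpowersetE => /andP[C0 CM] _.
by apply: f1 => //; apply: fsubset_trans CM ML.
Qed.

Lemma mobius_trivial N : N `<=` L -> mobius f N = f fset0 * (N == fset0)%:R.
Proof.
move=> NL; rewrite /mobius -sum_fpowerset_sign mulr_sumr.
apply: eq_fbigr => M; rewrite fpowersetE => MN _.
by rewrite mulrC subprod_trivial //; apply: fsubset_trans MN NL.
Qed.

Lemma mobius_sum_trivial : mobius_sum f L = cmod (subprod f L).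
Proof.
rewrite subprod_trivial // /mobius_sum (big_fsetD1 fset0) ?fpowersetE ?fsub0set //=.
rewrite mobius_trivial ?fsub0set // eqxx mulr1 weight0 mulr1 big1_fset ?addr0 //.
move=> N; rewrite !inE fpowersetE => /andP[N0 NL] _.
by rewrite mobius_trivial // (negbTE N0) mulr0 cmod0 mul0r.
Qed.

End Trivial.

Lemma subprod_reset f D M :
  subprod f M = (if D `<=` M then f D else 1) * subprod (reset f D) M.
Proof.
rewrite /subprod; case: ifP => DM.
  rewrite [LHS](big_fsetD1 D) ?fpowersetE // [in RHS](big_fsetD1 D) ?fpowersetE //.
  rewrite /= [reset f D D]/reset eqxx mul1r; congr (_ * _).
  by apply: eq_fbigr => C; rewrite !inE /reset => /andP[/negbTE -> _].
rewrite mul1r; apply: eq_fbigr => C; rewrite fpowersetE /reset => CM _.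
by case: eqP => // CD; move: DM; rewrite -CD CM.
Qed.

Lemma mobius_reset f D N :
  mobius f N = mobius (reset f D) N + (f D - 1) * mobius_sup (reset f D) D N.
Proof.
rewrite /mobius_sup big_mkcond mulr_sumr /mobius -big_split /=.
apply: eq_fbigr => M _ _; rewrite (subprod_reset f D).
case: (D `<=` M); last by rewrite mul1r mulr0 addr0.
by rewrite mulrBl mul1r addrC subrK mulrCA.
Qed.

Lemma mobius_sum_reset_le f D L :
  mobius_sum f L <= mobius_sum (reset f D) L +
    cmod (f D - 1) * \sum_(N <- fpowerset L) cmod (mobius_sup (reset f D) D N) * weight N.
Proof.
rewrite /mobius_sum mulr_sumr -big_split /=; apply: ler_sum => N _.
rewrite (mobius_reset f D) mulrA -mulrDl ler_wpM2r ?weight_ge0 //.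
by rewrite -cmodM ler_cmodD.
Qed.

Lemma bound_prod_reset f D L : D `<=` L ->
  bound_prod f L = bound f D * bound_prod (reset f D) L.
Proof.
move=> DL; rewrite /bound_prod [LHS](big_fsetD1 D) ?fpowersetE //.
rewrite [in RHS](big_fsetD1 D) ?fpowersetE //.
rewrite /= [bound (reset f D) D]bound1 ?mul1r; last by rewrite /reset eqxx.
congr (_ * _); apply: eq_fbigr => C; rewrite !inE => /andP[/negbTE CD _] _.
by rewrite /bound /reset CD.
Qed.

Lemma mobius_sup_condf f D N : D `<=` N ->
  mobius_sup f D N = mobius (condf f D) (N `\` D).
Proof.
move=> DN; rewrite /mobius_sup big_fpowerset_supset //.
apply: eq_fbigr => M; rewrite fpowersetE fsubsetD => /andP[_ dMD] _.
by rewrite fsetDDl [D `|` M]fsetUC /subprod big_fpowersetU.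
Qed.

Lemma mobius_sup_eq0 f D N : ~~ (D `<=` N) -> mobius_sup f D N = 0.
Proof.
move=> DN; rewrite /mobius_sup big1_fset // => M; rewrite fpowersetE => MN DM.
by move: DN; rewrite (fsubset_trans DM MN).
Qed.

Lemma sum_mobius_sup f D L : D `<=` L ->
  \sum_(N <- fpowerset L) cmod (mobius_sup f D N) * weight N =
  weight D * mobius_sum (condf f D) (L `\` D).
Proof.
move=> DL; rewrite (bigID (fun N => D `<=` N)) /= [X in _ + X]big1 ?addr0; last first.
  by move=> N DN; rewrite mobius_sup_eq0 // cmod0 mul0r.
rewrite big_fpowerset_supset // /mobius_sum mulr_sumr.
apply: eq_fbigr => N; rewrite fpowersetE fsubsetD => /andP[_ dND] _.
rewrite mobius_sup_condf ?fsubsetUr // fsetUDK_disjoint // weightU //.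
by rewrite mulrA mulrC.
Qed.

Lemma bound_condf_le f D C :
  bound (condf f D) C <= \prod_(E <- fpowerset D) bound f (C `|` E).
Proof.
apply: bound_le => [|S SC S0].
  by rewrite cmod_prod; apply: ler_prod => E _; rewrite cmod_ge0 cmod_le_bound.
have SCE E : S `<=` C `|` E by apply: fsubset_trans SC (fsubsetUl C E).
exact: (dominated_prod _ (weight_ge0 S) (fun E => dominated_bound f (SCE E) S0)).2.
Qed.

Lemma bound_prod_condf_le f D L : D `<=` L ->
  bound_prod (condf f D) (L `\` D) <= bound_prod f L.
Proof.
move=> DL; rewrite /bound_prod -[in leRHS](fsetDUK DL) big_fpowersetU ?fdisjointDl //.
by apply: ler_prod => C _; rewrite bound_ge0 bound_condf_le.
Qed.

Lemma mobius_sum_le_step f D L : D `<=` L -> D != fset0 ->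
  mobius_sum (reset f D) L <= bound_prod (reset f D) L ->
  mobius_sum (condf (reset f D) D) (L `\` D) <=
    bound_prod (condf (reset f D) D) (L `\` D) ->
  mobius_sum f L <= bound_prod f L.
Proof.
move=> DL D0; set g := reset f D => le_g le_gD.
have {}le_gD := le_trans le_gD (bound_prod_condf_le g DL).
have [_ domD] := dominated_bound f (fsubset_refl D) D0.
apply: le_trans (mobius_sum_reset_le f D L) _.
rewrite -/g (sum_mobius_sup _ DL) (bound_prod_reset f DL) -/g.
have c0 := mulr_ge0 (cmod_ge0 (f D - 1)) (weight_ge0 D).
have := ler_wpM2l c0 le_gD; have := ler_wpM2r (bound_prod_ge0 g L) domD.
lra.
Qed.

Lemma mobius_sum_le f L : mobius_sum f L <= bound_prod f L.
Proof.
have [n] := ubnP #|` L|; elim: n => // n IHn in L f *; rewrite ltnS => leLn.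
suff le_s (s : seq {fset T}) g :
    (forall C, C `<=` L -> C != fset0 -> C \notin s -> g C = 1) ->
    mobius_sum g L <= bound_prod g L.
  by apply: (le_s (fpowerset L)) => C; rewrite -fpowersetE => ->.
(* [s] lists the sets on which [g] may differ from 1; each step resets one of them. *)
elim: s g => [|D s IHs] g g1.
  by rewrite mobius_sum_trivial ?cmod_subprod_le // => C CL C0; apply: g1.
have [/andP[DL D0]|nDL] := boolP ((D `<=` L) && (D != fset0)).
  apply: (mobius_sum_le_step DL D0).
    apply: IHs => C CL C0 Cs; rewrite /reset; case: eqP => // /eqP CD.
    by apply: g1; rewrite // inE negb_or CD.
  apply: IHn; apply: leq_trans leLn; rewrite cardfsDS // ltn_subrL !cardfs_gt0 D0.
  by apply: contraNneq D0 => L0; rewrite -fsubset0 -L0.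
apply: IHs => C CL C0 Cs; apply: g1; rewrite // inE negb_or Cs andbT.
by apply: contraNneq nDL => <-; rewrite CL C0.
Qed.

End MobiusBound.

Section Gamma.
Variables (R : realType) (T : countType) (W : {fset T} -> R[i]) (x : T).

Lemma kappa1E M : kappa W [fset x] M = condW W [fset x] M.
Proof.
rewrite /kappa fpowerset1 big_mkcond big_fsetU1 ?big_seq_fset1 /= ?eqxx ?fset1_neq0 ?mul1r //.
by rewrite inE eq_sym fset1_neq0.
Qed.

Lemma kappa1_notin M : x \notin M ->
  kappa W [fset x] M = subprod (fun C => W (x |` C)) M.
Proof. by move=> xM; rewrite kappa1E /condW fsetI_eq0 fdisjoint1X xM. Qed.

Lemma kappa1_in M : x \in M -> kappa W [fset x] M = 0.
Proof.
move=> xM; rewrite kappa1E /condW fsetI_eq0 fdisjoint1X xM /=.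
by rewrite (introT hasP) //; exists x.
Qed.

Lemma gamma_mobius N : x \notin N -> gamma W x N = mobius (fun C => W (x |` C)) N.
Proof.
move=> xN; apply: eq_fbigr => M; rewrite fpowersetE => MN _.
by rewrite fset0U kappa1_notin //; apply: contra (fsubsetP MN x) xN.
Qed.

Lemma gamma_fsetU1 N : x \notin N -> gamma W x (x |` N) = - gamma W x N.
Proof.
move=> xN; rewrite /gamma /gammaB big_fpowersetU1 // -sumrN.
apply: eq_fbigr => M; rewrite fpowersetE => MN _ /=.
rewrite !fset0U (kappa1_in (fset1U1 x M)) mulr0 addr0 card_fsetU1D //.
by rewrite exprS mulN1r mulNr.
Qed.

Lemma sum_gamma_fsetU1 (a : T -> R) L : x \notin L ->
  \sum_(N <- fpowerset (x |` L)) cmod (gamma W x N) * weight a N =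
  (1 + a x) * \sum_(N <- fpowerset L) cmod (gamma W x N) * weight a N.
Proof.
move=> xL; rewrite big_fpowersetU1 // mulrDl mul1r mulr_sumr -big_split.
apply: eq_fbigr => N; rewrite fpowersetE => NL _.
have xN : x \notin N by apply: contra (fsubsetP NL x) xL.
by rewrite /= gamma_fsetU1 // cmodN /weight big_fsetU1 //= mulrCA.
Qed.

End Gamma.

Unset Implicit Arguments.
Local Open Scope ring_scope.
Local Open Scope fset_scope.

Theorem corollary6p5 (R : realType) (T : countType) (W : {fset T} -> R[i])
    (r : T -> R) (hr : forall t, 0 <= r t < 1) (Lam : {fset T}) (x : T) :
  \sum_(N <- fpowerset Lam) cmod (gamma W x N) * alphaS r N
    = (1 + alpha r x * (x \in Lam)%:R)
      * \sum_(N <- fpowerset (Lam `\ x)) cmod (gamma W x N) * alphaS r N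
  /\
  \sum_(N <- fpowerset (Lam `\ x)) cmod (gamma W x N) * alphaS r N
    <= \prod_(X <- fpowerset (x |` Lam) | x \in X)
         \big[Num.max/cmod (W X)]_(S <- fpowerset (X `\ x) | S != fset0)
            (1 + cmod (W X - 1) * alphaS r S).
Proof.
have alpha_ge0 t : 0 <= alpha r t.
  by have /andP[r0 r1] := hr t; rewrite divr_ge0 // subr_ge0 ltW.
have xLx : x \notin Lam `\ x by rewrite fsetD11.
have notin_sub N : N `<=` Lam `\ x -> x \notin N.
  by move=> NL; apply: contra (fsubsetP NL x) xLx.
split.
  have [xL|xL] := boolP (x \in Lam); last by rewrite mem_fsetD1 // mulr0 addr0 mul1r.
  by rewrite -[in LHS](fsetD1K xL) (sum_gamma_fsetU1 _ (alpha r)) // mulr1.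
have -> : x |` Lam = x |` (Lam `\ x) by apply/fsetP => z; rewrite !inE; case: eqP.
rewrite big_fpowersetU1_mem //.
under [X in _ <= X]eq_fbigr => C /[!fpowersetE] /notin_sub xC _ do rewrite fsetU1K //.
under [X in X <= _]eq_fbigr => N /[!fpowersetE] /notin_sub xN _ do rewrite gamma_mobius //.
exact: (mobius_sum_le alpha_ge0).
Qed.
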